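(* Define periodic sequences $K_j\in\{0,1\}^{\mathbb N}$ by: $K_1=111\dots$ (repeating block $B_1=1$), and for $j\ge1$, $K_{j+1}$ is the periodic sequence with repeating block $B_{j+1}$ of length $2^{j}$ obtained by writing $B_j$ twice and replacing the last symbol by its complement ($0\leftrightarrow1$). Let $K_\infty=\lim_{j\to\infty}K_j$ (each $B_j$ is a prefix of $B_{j+1}$). For a sequence $s=s_1s_2\dots$ let $\tau(s)=\sum_{k\ge1}t_k2^{-k}$ with $t_k=\sum_{i=1}^k s_i\pmod 2$, and write $\tau_\infty=\tau(K_\infty)=0.t_1t_2t_3\dots$ (binary expansion given by these digits $t_k$). For an integer $p\ge1$ with binary expansion $p=\sum_{i\ge0}n_i2^i$, $n_i\in\{0,1\}$, set $s(p)=\sum_{i\ge0}n_i\pmod 2$. Then $t_k=s(p)$ whenever $k=p\cdot2^\ell$ with $\ell\ge0$ and $p\ge1$ odd.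
   Context: Thus $K_2=\overline{10}$, $K_3=\overline{1011}$, $K_4=\overline{10111010}$, and $K_\infty=1011\,1010\,1011\,1011\dots$; $K_\infty$ is also the fixed point beginning with $1$ of the substitution $1\mapsto10$, $0\mapsto11$. *)

(* Sequences in {0,1}^N are functions nat -> bool
   (true = 1, false = 0), indexed from 1 (index 0 is unused). *)
From mathcomp Require Import all_boot.
Set Implicit Arguments. Unset Strict Implicit. Unset Printing Implicit Defensive.

(* Blocks B_j for j >= 1: B_1 = [1]; B_{j+1} = B_j B_j with last symbol
   complemented.  (B 0 is an unused dummy equal to B 1.) *)
Fixpoint B (j : nat) : seq bool :=
  match j with
  | 0 => [:: true]
  | 1 => [:: true]
  | j'.+1 => let b := B j' ++ B j' in
             set_nth false b (size b).-1 (~~ nth false b (size b).-1)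
  end.

Definition K (j : nat) (i : nat) : bool :=
  nth false (B j) ((i.-1) %% size (B j)).

Definition is_limit_K (Kinf : nat -> bool) : Prop :=
  forall i, 1 <= i -> exists J, forall j, J <= j -> K j i = Kinf i.

(* t_k(s) = s_1 + ... + s_k (mod 2), the k-th binary digit of tau(s). *)
Definition tdigit (s : nat -> bool) (k : nat) : bool :=
  odd (\sum_(1 <= i < k.+1) nat_of_bool (s i)).

Definition bindigit (p i : nat) : bool := odd (p %/ 2 ^ i).

(* s(p) = sum of binary digits of p (mod 2); digits with i > p vanish. *)
Definition sdig (p : nat) : bool :=
  odd (\sum_(i < p.+1) nat_of_bool (bindigit p i)).

(* K_oo is the sequence whose (n+1)-st symbol is s(n) xor s(n+1) (with
   s(0) = 0): the block B_(j+1) lists these values for n < 2^j, because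
   adding 2^j to n flips s at both n and n+1, except at the end of the
   block, where n+1 = 2^(j+1) and s(2^(j+1)) = s(2^j) = 1.  Hence the
   partial sums telescope and t_k = s(k) for every k >= 0, and
   s(p 2^l) = s(p) since appending zero digits does not change the digit
   sum. *)

From mathcomp Require Import all_boot zify.
Set Implicit Arguments. Unset Strict Implicit.

Lemma bindigit0 p : bindigit p 0 = odd p.
Proof. by rewrite /bindigit expn0 divn1. Qed.

Lemma bindigitS p i : bindigit p i.+1 = bindigit p./2 i.
Proof. by rewrite /bindigit expnS divnMA divn2. Qed.

Lemma bindigit_small p i : p < 2 ^ i -> bindigit p i = false.
Proof. by move=> lt_p; rewrite /bindigit divn_small. Qed.

Lemma sdig_widen p N : p < N ->
  sdig p = odd (\sum_(i < N) nat_of_bool (bindigit p i)).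
Proof.
move=> lt_pN; rewrite /sdig.
rewrite (big_ord_widen N (fun i => nat_of_bool (bindigit p i))) //.
rewrite big_mkcond; congr odd; apply: eq_bigr => i _.
case: ltnP => // le_p1i; rewrite bindigit_small //.
exact: leq_trans le_p1i (ltnW (ltn_expl i (isT : 1 < 2))).
Qed.

Lemma sdig_half p : sdig p = odd p (+) sdig p./2.
Proof.
case: p => [|p]; first by [].
rewrite {1}/sdig big_ord_recl bindigit0 oddD oddb; congr addb.
rewrite (@sdig_widen p.+1./2 p.+1); last by rewrite ltn_half_double -addnn; lia.
by congr odd; apply: eq_bigr => i _; rewrite bindigitS.
Qed.

Lemma sdig0 : sdig 0 = false.
Proof. by rewrite /sdig big_ord1. Qed.

Lemma sdig_double p : sdig p.*2 = sdig p.
Proof. by rewrite sdig_half odd_double doubleK. Qed.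

Lemma sdig_mul_exp2 p l : sdig (p * 2 ^ l) = sdig p.
Proof.
elim: l => [|l IHl]; first by rewrite muln1.
by rewrite expnS mulnCA mul2n sdig_double.
Qed.

Lemma sdig_exp2 j : sdig (2 ^ j) = true.
Proof. by rewrite -(mul1n (2 ^ j)) sdig_mul_exp2 sdig_half sdig0. Qed.

Lemma sdig_exp2D j r : r < 2 ^ j -> sdig (2 ^ j + r) = ~~ sdig r.
Proof.
elim: j r => [|j IHj] r lt_r.
  have -> : r = 0 by rewrite expn0 in lt_r; lia.
  by rewrite addn0 sdig_exp2 sdig0.
rewrite sdig_half expnS mul2n oddD odd_double halfD odd_double doubleK add0n.
rewrite IHj; last by rewrite ltn_half_double -mul2n -expnS.
by rewrite [sdig r]sdig_half addbN.
Qed.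

Definition sdig_change n := sdig n (+) sdig n.+1.

Lemma sdig_change_exp2D j r : r.+1 < 2 ^ j ->
  sdig_change (2 ^ j + r) = sdig_change r.
Proof.
move=> lt_r1; rewrite /sdig_change -addnS !sdig_exp2D ?(ltnW lt_r1) //.
by rewrite addNb addbN negbK.
Qed.

Lemma sdig_change_exp2_pred j :
  sdig_change (2 ^ j.+1).-1 = ~~ sdig_change (2 ^ j).-1.
Proof.
have pos : 0 < 2 ^ j := expn_gt0 2 j.
have -> : (2 ^ j.+1).-1 = 2 ^ j + (2 ^ j).-1 by rewrite expnS; lia.
rewrite /sdig_change -addnS prednK // addnn -mul2n -expnS !sdig_exp2.
by rewrite sdig_exp2D ?prednK ?ltn_predL // addNb.
Qed.

Lemma B_succ j : B j.+2 =
  set_nth false (B j.+1 ++ B j.+1) (size (B j.+1 ++ B j.+1)).-1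
    (~~ nth false (B j.+1 ++ B j.+1) (size (B j.+1 ++ B j.+1)).-1).
Proof. by []. Qed.

Lemma size_B j : size (B j.+1) = 2 ^ j.
Proof.
elim: j => [|j IHj] //.
rewrite B_succ size_set_nth size_cat IHj expnS.
have := expn_gt0 2 j; lia.
Qed.

Lemma nth_B j n : n < 2 ^ j -> nth false (B j.+1) n = sdig_change n.
Proof.
elim: j n => [|j IHj] n lt_n.
  have -> : n = 0 by rewrite expn0 in lt_n; lia.
  by rewrite /sdig_change sdig0 (sdig_exp2 0).
have pos : 0 < 2 ^ j := expn_gt0 2 j.
have e2 : 2 ^ j.+1 = 2 ^ j + 2 ^ j by rewrite expnS; lia.
rewrite B_succ size_cat size_B -e2.
move: (B j.+1) (size_B j) IHj => b size_b IHb.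
rewrite nth_set_nth /= !nth_cat size_b.
case: eqP => [-> | ne_n].
  rewrite ifF; last by lia.
  rewrite sdig_change_exp2_pred -IHb ?ltn_predL //; congr (~~ nth _ _ _); lia.
case: ltnP => [lt_nj | le_jn]; first exact: IHb.
have -> : n = 2 ^ j + (n - 2 ^ j) by lia.
rewrite addKn sdig_change_exp2D ?IHb //; lia.
Qed.

Lemma K_succ j n : n < 2 ^ j -> K j.+1 n.+1 = sdig_change n.
Proof. by move=> lt_n; rewrite /K size_B modn_small // nth_B. Qed.

Lemma limit_K_sdig_change Kinf n :
  is_limit_K Kinf -> Kinf n.+1 = sdig_change n.
Proof.
move=> limK; have [J KJ] := limK n.+1 isT.
rewrite -(KJ (maxn J n).+1) ?leqW ?leq_maxl // K_succ //.
exact: leq_trans (ltn_expl n (isT : 1 < 2)) (leq_pexp2l (isT : 0 < 2) (leq_maxr J n)).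
Qed.

Lemma tdigit_limit_K Kinf k : is_limit_K Kinf -> tdigit Kinf k = sdig k.
Proof.
move=> limK; elim: k => [|k IHk]; first by rewrite /tdigit big_geq ?sdig0.
rewrite /tdigit big_nat_recr //= oddD -/(tdigit Kinf k) IHk.
by rewrite limit_K_sdig_change // oddb /sdig_change addbA addbb.
Qed.

Theorem proposition3 (Kinf : nat -> bool) (p l : nat) :
  is_limit_K Kinf -> 1 <= p -> odd p ->
  tdigit Kinf (p * 2 ^ l) = sdig p.
Proof. by move=> limK _ _; rewrite tdigit_limit_K // sdig_mul_exp2. Qed.
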